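(* Let $p=(p_i)_{i\in\mathbb{N}}$ be a cookie environment with $p_i\in[\frac12,1)$ for all $i$, and suppose $\delta=\sum_{i=1}^\infty(2p_i-1)<\infty$. Let $\nu(x)=\frac1x\mathbb{E}[(U_p(x)-x)^2]$. Then $\nu(x)\to2$ as $x\to\infty$, and there is a constant $C$ depending only on $p$ such that $|\nu(x)-2|\le C\log^4(x)/\sqrt x$ for all sufficiently large $x$.
   Context: For a cookie environment $p$, let $B_1,B_2,\dots$ be independent Bernoulli random variables with $\Pr[B_i=1]=p_i$ ($B_i=1$ is a ''success'', $B_i=0$ a ''failure''). For a positive integer $x$, $U_p(x)=\inf\{k\in\mathbb{N}:\sum_{i=1}^k(1-B_i)=x\}-x$, i.e. the number of successes before the $x$-th failure. *)

From HB Require Import structures.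
From mathcomp Require Import all_boot all_order all_algebra.
From mathcomp Require Import all_classical all_reals all_analysis.
Set Implicit Arguments. Unset Strict Implicit. Unset Printing Implicit Defensive.
Import Order.TTheory GRing.Theory Num.Theory.
Local Open Scope classical_set_scope.
Local Open Scope ring_scope.

(* Indices are shifted: the paper's B_1, B_2, ... are B 0, B 1, ...;
   likewise p_1, p_2, ... are p 0, p 1, .... *)

Definition nfail (b : nat -> bool) (k : nat) : nat := \sum_(i < k) ~~ b i.

(* U_p(x) for a single outcome sequence: inf{k : nfail k = x} - x,
   or None (= +oo) if the infimum is over the empty set. *)
Definition Uval (b : nat -> bool) (x : nat) : option nat :=
  match pselect (exists k, nfail b k == x) with
  | left H => Some (ex_minn H - x)%N
  | right _ => None
  end.

Definition sqdev {R : realType} (b : nat -> bool) (x : nat) : \bar R :=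
  match Uval b x with
  | Some u => (((u%:R - x%:R) ^+ 2 : R))%:E
  | None => +oo%E
  end.

(* B is a sequence of mutually independent Bernoulli random variables on
   the probability space P with P[B i = true] = p i. *)
Definition cookie_process {d : measure_display} {T : measurableType d}
    {R : realType} (P : probability T R) (p : nat -> R)
    (B : nat -> T -> bool) : Prop :=
  (forall i, measurable [set w | B i w]) /\
  (forall i, P [set w | B i w] = (p i)%:E) /\
  (forall (s : seq nat) (b : nat -> bool), uniq s ->
     P (\bigcap_(i in [set` s]) [set w | B i w = b i])
     = (\prod_(i <- s) P [set w | B i w = b i])%E).

Definition nu {d : measure_display} {T : measurableType d} {R : realType}
    (P : probability T R) (B : nat -> T -> bool) (x : nat) : \bar R :=
  ((x%:R^-1)%:E * \int[P]_w sqdev (fun i => B i w) x)%E.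

From HB Require Import structures.
From mathcomp Require Import all_boot all_order all_algebra.
From mathcomp Require Import all_classical all_reals all_analysis.
From mathcomp Require Import measurable_realfun ring lra zify.
Import Order.TTheory GRing.Theory Num.Theory.
Local Open Scope classical_set_scope.
Local Open Scope ring_scope.

(* Count +1 for each success and -1 for each failure until the x-th failure; at
   that time the walk equals U - x.  Centring the increments splits the walk into
   a martingale A plus the accumulated drift D, the sum of the 2 p_i - 1 seen
   before stopping, so that 0 <= D <= delta.  Optional stopping gives
   E[A^2] = E[T] - O(delta) for the stopping time T, and Wald's identity gives
   E[T] = 2x + O(delta).  With (a + b)^2 <= (1 + 1/y) a^2 + (1 + y) b^2 for
   y = sqrt x this yields E[(U - x)^2] = 2x + O(sqrt x), i.e.
   |nu(x) - 2| = O(1/sqrt x), which is stronger than the log^4 bound.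
   All expectations are first computed for the walk observed up to a finite time n,
   where they are finite sums over {0,1}^n; the probability of fewer than x
   failures by time n is at most 2^x e^((delta - n)/4), and monotone convergence
   lets n go to infinity. *)

Set Implicit Arguments.
Unset Strict Implicit.
Unset Printing Implicit Defensive.

Lemma sqrD_le (R : realFieldType) (a b y : R) : 0 < y ->
  (a + b) ^+ 2 <= (1 + y^-1) * a ^+ 2 + (1 + y) * b ^+ 2.
Proof.
move=> y0; rewrite -subr_ge0.
have -> : (1 + y^-1) * a ^+ 2 + (1 + y) * b ^+ 2 - (a + b) ^+ 2 = (a - y * b) ^+ 2 / y.
  by field; rewrite gt_eqF.
by rewrite divr_ge0 ?sqr_ge0 // ltW.
Qed.

Lemma sqrD_ge (R : realFieldType) (a b y : R) : 0 < y ->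
  (1 - y^-1) * a ^+ 2 - y * b ^+ 2 <= (a + b) ^+ 2.
Proof.
move=> y0; rewrite -subr_ge0.
have -> : (a + b) ^+ 2 - ((1 - y^-1) * a ^+ 2 - y * b ^+ 2) = (a + y * b) ^+ 2 / y + b ^+ 2.
  by field; rewrite gt_eqF.
by rewrite addr_ge0 ?sqr_ge0 // divr_ge0 ?sqr_ge0 // ltW.
Qed.

Lemma sqrS_div_expR_le (R : realType) n : (0 < n)%N ->
  n.+1%:R ^+ 2 / expR (n%:R / 4) <= 1536 / n%:R :> R.
Proof.
move=> n0; set m : R := n%:R; have m1 : 1 <= m by rewrite /m ler1n.
have cube_le : m ^+ 3 / 384 <= expR (m / 4).
  apply: le_trans (expR_ge1Dxn 2 _); last by lra.
  have -> : 3`!%:R = 6 :> R by [].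
  have -> : (m / 4) ^+ 3 / 6 = m ^+ 3 / 384 by field.
  lra.
rewrite ler_pdivrMr ?expR_gt0 //; apply: le_trans (ler_wpM2l _ cube_le); last first.
  exact: divr_ge0 (ler0n _ _) (ler0n _ _).
have -> : 1536 / m * (m ^+ 3 / 384) = 4 * m ^+ 2.
  by field; rewrite gt_eqF // (lt_le_trans ltr01 m1).
rewrite -addn1 natrD -/m; nra.
Qed.

Lemma ler_of_ler_add_div_nat (R : archiFieldType) (a b c : R) (n0 : nat) :
  (forall m, (n0 <= m)%N -> (0 < m)%N -> a <= b + c / m%:R) -> a <= b.
Proof.
move=> le_ab; apply/ler_addgt0Pr => e e0.
set m := (Num.bound (`|c| / e) + n0).+1.
have m_gt : `|c| / e < m%:R.
  apply: lt_le_trans (archi_boundP _) _; first by rewrite divr_ge0 // ltW.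
  by rewrite ler_nat /m; lia.
apply: le_trans (le_ab m _ _) _; rewrite ?lerD2l //; first by rewrite /m; lia.
have : c / m%:R <= `|c| / m%:R by rewrite ler_wpM2r ?invr_ge0 ?ler0n ?ler_norm.
move/le_trans; apply; rewrite ler_pdivrMr ?ltr0n // mulrC -ler_pdivrMr //; exact: ltW.
Qed.

Lemma norm_ratio_sub2_le (R : realFieldType) (D y r : R) : 0 <= D -> 1 <= y ->
  (1 - y^-1) * (2 * y ^+ 2 - D) - y * D ^+ 2 <= r ->
  r <= (1 + y^-1) * (2 * y ^+ 2 + D) + (1 + y) * D ^+ 2 ->
  `|r / y ^+ 2 - 2| <= (2 + 2 * D + 2 * D ^+ 2) / y.
Proof.
move=> D0 y1 r_ge r_le; have y0 : 0 < y by lra.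
have yn0 : y != 0 by rewrite gt_eqF.
have D_y : 0 <= D / y <= D by rewrite divr_ge0 ?ler_pdivrMr ?ler_peMr ?(ltW y0).
have DyD : D <= y * D by rewrite ler_peMl.
have DyD2 : D ^+ 2 <= y * D ^+ 2 by rewrite ler_peMl ?sqr_ge0.
have : `|r - 2 * y ^+ 2| <= y * (2 + 2 * D + 2 * D ^+ 2).
  have -> : y * (2 + 2 * D + 2 * D ^+ 2) = 2 * y + 2 * (y * D) + 2 * (y * D ^+ 2) by ring.
  have e1 : (1 - y^-1) * (2 * y ^+ 2 - D) = 2 * y ^+ 2 - 2 * y - D + D / y by field.
  have e2 : (1 + y^-1) * (2 * y ^+ 2 + D) = 2 * y ^+ 2 + 2 * y + D + D / y by field.
  rewrite e1 in r_ge; rewrite e2 in r_le.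
  have := sqr_ge0 D; case/andP: D_y => *.
  by rewrite ler_norml; apply/andP; split; lra.
have -> : r / y ^+ 2 - 2 = (r - 2 * y ^+ 2) / y ^+ 2 by field.
have -> : (2 + 2 * D + 2 * D ^+ 2) / y = y * (2 + 2 * D + 2 * D ^+ 2) / y ^+ 2 by field.
rewrite normrM normfV (ger0_norm (sqr_ge0 y)) => /ler_wpM2r; apply.
by rewrite invr_ge0 sqr_ge0.
Qed.

(** * Expectations over the first trials *)

Fixpoint bool_seqs (n : nat) : seq (seq bool) :=
  if n is n'.+1 then [seq rcons s b | s <- bool_seqs n', b <- [:: true; false]]
  else [:: [::]].

Lemma mem_bool_seqs n s : (s \in bool_seqs n) = (size s == n).
Proof.
elim: n s => [|n IH] s; first by rewrite inE size_eq0.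
apply/idP/idP => [/allpairsP[[t b] [/= ht _ ->]]|]; first by rewrite size_rcons eqSS -IH.
elim/last_ind: s => [|t b _] //; rewrite size_rcons eqSS -IH => ht.
by apply/allpairsP; exists (t, b); case: b; rewrite !inE eqxx ?orbT.
Qed.

Lemma uniq_bool_seqs n : uniq (bool_seqs n).
Proof.
elim: n => [|n IH] //; apply: allpairs_uniq => // [[t1 b1] [t2 b2]] _ _.
exact: rcons_inj.
Qed.

Section CookieWalk.
Variables (R : realType) (p : nat -> R).

(* [Eprefix n f] is the expectation of [f] applied to the first [n] outcomes,
   computed by conditioning on the last one. *)
Fixpoint Eprefix (n : nat) (f : seq bool -> R) : R :=
  if n is n'.+1 then
    Eprefix n' (fun s => p n' * f (rcons s true) + (1 - p n') * f (rcons s false))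
  else f [::].

Lemma eq_Eprefix n f g :
  (forall s, size s = n -> f s = g s) -> Eprefix n f = Eprefix n g.
Proof.
elim: n f g => [|n IH] f g fg /=; first exact: fg.
by apply: IH => s hs; rewrite !fg // size_rcons hs.
Qed.

Lemma EprefixD n f g : Eprefix n (fun s => f s + g s) = Eprefix n f + Eprefix n g.
Proof. by elim: n f g => [|n IH] f g //=; rewrite -IH; apply: eq_Eprefix => s _; ring. Qed.

Lemma EprefixZ n c f : Eprefix n (fun s => c * f s) = c * Eprefix n f.
Proof. by elim: n f => [|n IH] f //=; rewrite -IH; apply: eq_Eprefix => s _; ring. Qed.

Lemma Eprefix_cst n c : Eprefix n (fun=> c) = c.
Proof.
by elim: n => [|n IH] //=; rewrite -[RHS]IH; apply: eq_Eprefix => s _; ring.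
Qed.

Lemma EprefixB n f g : Eprefix n (fun s => f s - g s) = Eprefix n f - Eprefix n g.
Proof.
rewrite -mulN1r -EprefixZ -EprefixD.
by apply: eq_Eprefix => s _; rewrite mulN1r.
Qed.

Lemma Eprefix_rcons n f g :
  (forall s b, size s = n -> f (rcons s b) = f s + g s b) ->
  Eprefix n.+1 f = Eprefix n f + Eprefix n (fun s => p n * g s true + (1 - p n) * g s false).
Proof. by move=> fg /=; rewrite -EprefixD; apply: eq_Eprefix => s hs; rewrite !fg //; ring. Qed.

Lemma Eprefix_rconsM n f c :
  (forall s b, size s = n -> f (rcons s b) = f s * c b) ->
  Eprefix n.+1 f = Eprefix n f * (p n * c true + (1 - p n) * c false).
Proof.
by move=> fc /=; rewrite mulrC -EprefixZ; apply: eq_Eprefix => s hs; rewrite !fc //; ring.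
Qed.

Lemma ler_Eprefix n f g : (forall i, 0 <= p i <= 1) ->
  (forall s, size s = n -> f s <= g s) -> Eprefix n f <= Eprefix n g.
Proof.
move=> p01; elim: n f g => [|n IH] f g fg /=; first exact: fg.
apply: IH => s hs; have /andP[p0 p1] := p01 n.
by rewrite lerD // ler_wpM2l ?subr_ge0 // fg // size_rcons hs.
Qed.

Definition trial_prob (i : nat) (b : bool) : R := if b then p i else 1 - p i.
Definition seq_prob (s : seq bool) : R := \prod_(i < size s) trial_prob i (nth true s i).

Lemma seq_prob_rcons s b : seq_prob (rcons s b) = seq_prob s * trial_prob (size s) b.
Proof.
rewrite /seq_prob size_rcons big_ord_recr /= nth_rcons ltnn eqxx; congr (_ * _).
by apply: eq_bigr => i _; rewrite nth_rcons ltn_ord.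
Qed.

Lemma Eprefix_sum n f : Eprefix n f = \sum_(s <- bool_seqs n) seq_prob s * f s.
Proof.
elim: n f => [|n IH] f; first by rewrite /= big_seq1 /seq_prob big_ord0 mul1r.
rewrite [Eprefix _ _]/= IH big_allpairs_dep /=; apply: eq_big_seq => s.
rewrite mem_bool_seqs => /eqP sn.
by rewrite !big_cons big_nil !seq_prob_rcons sn /trial_prob addr0; ring.
Qed.

Definition step (b : bool) : R := if b then 1 else -1.
Definition drift (i : nat) : R := 2 * p i - 1.

(** * The walk stopped at the x-th failure *)

Section StoppedWalk.
Variable x : nat.

Definition nfails (s : seq bool) : nat := nfail (nth true s) (size s).
Definition alive_at (s : seq bool) (i : nat) : R := (nfail (nth true s) i < x)%:R.
Definition alive (s : seq bool) : R := (nfails s < x)%:R.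
Definition stopped_sum (f : nat -> bool -> R) (s : seq bool) : R :=
  \sum_(i < size s) alive_at s i * f i (nth true s i).

Definition walk := stopped_sum (fun _ b => step b).
Definition noise := stopped_sum (fun i b => step b - drift i).
Definition drift_sum := stopped_sum (fun i _ => drift i).
Definition lifetime := stopped_sum (fun _ _ => 1).
Definition fails := stopped_sum (fun _ b => (~~ b)%:R).

Lemma nfail_nth_rcons s b i :
  (i <= size s)%N -> nfail (nth true (rcons s b)) i = nfail (nth true s) i.
Proof. by move=> hi; apply: eq_bigr => j _; rewrite nth_rcons (leq_trans (ltn_ord j) hi). Qed.

Lemma nfails_rcons s b : nfails (rcons s b) = (nfails s + ~~ b)%N.
Proof.
rewrite /nfails /nfail size_rcons big_ord_recr /= nth_rcons ltnn eqxx.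
by congr (_ + _)%N; apply: nfail_nth_rcons.
Qed.

Lemma stopped_sum_rcons f s b :
  stopped_sum f (rcons s b) = stopped_sum f s + alive s * f (size s) b.
Proof.
rewrite /stopped_sum size_rcons big_ord_recr /= nth_rcons ltnn eqxx.
rewrite /alive_at nfail_nth_rcons //; congr (_ + _).
by apply: eq_bigr => i _; rewrite nfail_nth_rcons ?nth_rcons ?ltn_ord // ltnW.
Qed.

Lemma alive_sqr s : alive s ^+ 2 = alive s.
Proof. by rewrite /alive; case: (_ < _)%N; rewrite /= ?expr0n ?expr1n. Qed.

Lemma walk_split s : walk s = noise s + drift_sum s.
Proof.
rewrite /walk /noise /drift_sum /stopped_sum -big_split.
by apply: eq_bigr => i _ /=; ring.
Qed.

Lemma lifetime_split s : lifetime s = walk s + 2 * fails s.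
Proof.
rewrite /lifetime /walk /fails /stopped_sum mulr_sumr -big_split /=.
by apply: eq_bigr => i _; rewrite /step; case: nth => /=; ring.
Qed.

Lemma fails_min s : fails s = (minn (nfails s) x)%:R.
Proof.
elim/last_ind: s => [|s b IH].
  by rewrite /fails /stopped_sum big_ord0 /nfails /nfail big_ord0 min0n.
rewrite /fails stopped_sum_rcons -/(fails s) IH nfails_rcons /alive.
by case: b; case: ltnP => /= h; rewrite ?mul0r ?mulr0 ?mulr1 ?addr0 -?natrD; congr (_%:R); lia.
Qed.

Lemma norm_walk s : `|walk s| <= (size s)%:R.
Proof.
have -> : (size s)%:R = \sum_(i < size s) (1 : R) by rewrite sumr_const card_ord.
apply: le_trans (ler_norm_sum _ _ _) _; apply: ler_sum => i _.
rewrite /alive_at /step; case: (_ < _)%N; case: nth;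
  by rewrite /= ?mul0r ?mul1r ?normr0 ?normrN ?normr1.
Qed.

Definition alive_prob k := Eprefix k alive.

Lemma Eprefix_stopped_sum f n : Eprefix n (stopped_sum f) =
  \sum_(k < n) Eprefix k (fun s => alive s * (p k * f k true + (1 - p k) * f k false)).
Proof.
elim: n => [|n IH]; first by rewrite big_ord0 /= /stopped_sum big_ord0.
rewrite (@Eprefix_rcons n _ (fun s b => alive s * f n b)); last first.
  by move=> s b hs; rewrite stopped_sum_rcons hs.
by rewrite IH big_ord_recr /=; congr (_ + _); apply: eq_Eprefix => s _; ring.
Qed.

Lemma Eprefix_lifetime n : Eprefix n lifetime = \sum_(k < n) alive_prob k.
Proof. by rewrite Eprefix_stopped_sum; apply: eq_bigr => k _; apply: eq_Eprefix => s _; ring. Qed.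

Lemma Eprefix_noise n : Eprefix n noise = 0.
Proof.
rewrite Eprefix_stopped_sum big1 // => k _; rewrite -(Eprefix_cst k 0).
by apply: eq_Eprefix => s _; rewrite /step /drift; ring.
Qed.

Lemma Eprefix_drift_sum n : Eprefix n drift_sum = \sum_(k < n) drift k * alive_prob k.
Proof.
rewrite Eprefix_stopped_sum; apply: eq_bigr => k _; rewrite -EprefixZ.
by apply: eq_Eprefix => s _; ring.
Qed.

Lemma Eprefix_noise_sqr n :
  Eprefix n (fun s => noise s ^+ 2) = \sum_(k < n) (1 - drift k ^+ 2) * alive_prob k.
Proof.
elim: n => [|n IH]; first by rewrite big_ord0 /= /noise /stopped_sum big_ord0 expr0n.
rewrite (@Eprefix_rcons n _ (fun s b =>
    2 * noise s * alive s * (step b - drift n) + alive s * (step b - drift n) ^+ 2)); last first.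
  move=> s b hs; rewrite /noise stopped_sum_rcons -/(noise s) hs.
  by rewrite sqrrD exprMn alive_sqr; ring.
rewrite IH big_ord_recr /=; congr (_ + _); rewrite -EprefixZ.
by apply: eq_Eprefix => s _; rewrite /step /drift; ring.
Qed.

Lemma Eprefix_half_pow_nfails n :
  Eprefix n (fun s => 2^-1 ^+ nfails s) = \prod_(k < n) (p k + (1 - p k) / 2).
Proof.
elim: n => [|n IH]; first by rewrite big_ord0 /= /nfails /nfail big_ord0 expr0.
rewrite (@Eprefix_rconsM n _ (fun b : bool => if b then 1 else 2^-1)); last first.
  by move=> s b _; rewrite nfails_rcons exprD; case: b.
by rewrite IH big_ord_recr /= mulr1.
Qed.

Hypothesis p_range : forall i, 1 / 2 <= p i <= 1.

Lemma p01 i : 0 <= p i <= 1.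
Proof. by have /andP[? ?] := p_range i; apply/andP; split; lra. Qed.

Lemma drift01 i : 0 <= drift i <= 1.
Proof. by have /andP[? ?] := p_range i; rewrite /drift; apply/andP; split; lra. Qed.

Lemma alive01 s : 0 <= alive s <= 1.
Proof. by rewrite /alive; case: (_ < _)%N; rewrite /= ?lexx ?ler01. Qed.

Lemma alive_prob01 k : 0 <= alive_prob k <= 1.
Proof.
by apply/andP; split; [rewrite -(Eprefix_cst k 0) | rewrite -(Eprefix_cst k 1)];
  apply: ler_Eprefix p01 _ => s _; case/andP: (alive01 s).
Qed.

Lemma fails_bounds s : x%:R * (1 - alive s) <= fails s <= x%:R.
Proof.
rewrite fails_min /alive ler_nat; case: ltnP => h /=; last by rewrite subr0 mulr1 ler_nat; lia.
by rewrite subrr mulr0 ler0n; lia.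
Qed.

(* On the event that the [x]-th failure comes after trial [n], the square
   [(n.+1 - 2 * x) ^ 2] is a lower bound for [(U - x) ^ 2]: this makes
   [trunc_sqdev n] nondecreasing in [n], with limit [(U - x) ^ 2]. *)
Definition trunc_sqdev (n : nat) (s : seq bool) : R :=
  if (x <= nfails s)%N then walk s ^+ 2 else ((n.+1 - 2 * x) ^ 2)%N%:R.

Lemma trunc_sqdev_ge0 n s : 0 <= trunc_sqdev n s.
Proof. by rewrite /trunc_sqdev; case: ifP; rewrite ?sqr_ge0 ?ler0n. Qed.

(* Markov's inequality for [2 ^ (x - nfails s)]. *)
Lemma alive_prob_le_prod k :
  alive_prob k <= 2 ^+ x * \prod_(i < k) (p i + (1 - p i) / 2).
Proof.
rewrite -Eprefix_half_pow_nfails -EprefixZ; apply: ler_Eprefix p01 _ => s _.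
rewrite /alive; case: ltnP => h /=; last by rewrite mulr_ge0 ?exprn_ge0 ?invr_ge0 ?ler0n.
rewrite exprVn ler_pdivlMr ?exprn_gt0 // mul1r.
by rewrite (ler_eXn2l (_ : 1 < 2)) ?ltr1n // ltnW.
Qed.

Lemma prod_le_expR k :
  \prod_(i < k) (p i + (1 - p i) / 2) <= expR ((\sum_(i < k) drift i - k%:R) / 4).
Proof.
have -> : (\sum_(i < k) drift i - k%:R) / 4 = \sum_(i < k) (drift i - 1) / 4.
  by rewrite -mulr_suml [in RHS]sumrB sumr_const card_ord.
rewrite expR_sum; apply: ler_prod => i _; have /andP[? ?] := p_range i.
by apply/andP; split; [lra | apply: le_trans (expR_ge1Dx _); rewrite /drift; lra].
Qed.

Section Moments.
Variables (n : nat) (Delta : R).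
Hypothesis drift_le : \sum_(k < n) drift k <= Delta.

Lemma drift_sum_bounds s : size s = n -> 0 <= drift_sum s <= Delta.
Proof.
move=> hs; apply/andP; split.
  by apply: sumr_ge0 => i _; rewrite mulr_ge0 ?ler0n //; case/andP: (drift01 i).
apply: le_trans drift_le; rewrite -hs; apply: ler_sum => i _.
by case/andP: (drift01 i); rewrite /alive_at; case: (_ < _)%N; rewrite /= ?mul0r ?mul1r.
Qed.

Lemma Eprefix_drift_sum_bounds : 0 <= Eprefix n drift_sum <= Delta.
Proof.
rewrite Eprefix_drift_sum; apply/andP; split.
  apply: sumr_ge0 => i _.
  by case/andP: (drift01 i); case/andP: (alive_prob01 i) => *; rewrite mulr_ge0.
apply: le_trans drift_le; apply: ler_sum => i _.
by case/andP: (drift01 i); case/andP: (alive_prob01 i) => *; rewrite ler_piMr.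
Qed.

Lemma Eprefix_drift_sum_sqr_le : Eprefix n (fun s => drift_sum s ^+ 2) <= Delta ^+ 2.
Proof.
rewrite -[X in _ <= X](Eprefix_cst n); apply: ler_Eprefix p01 _ => s hs.
by case/andP: (drift_sum_bounds hs) => *; nra.
Qed.

Lemma Eprefix_noise_sqr_bounds :
  Eprefix n lifetime - Delta <= Eprefix n (fun s => noise s ^+ 2) <= Eprefix n lifetime.
Proof.
rewrite Eprefix_noise_sqr Eprefix_lifetime; apply/andP; split; last first.
  by apply: ler_sum => i _; case/andP: (drift01 i); case/andP: (alive_prob01 i) => *; nra.
rewrite lerBlDr; apply: le_trans (lerD (lexx _) drift_le); rewrite -big_split /=.
by apply: ler_sum => i _; case/andP: (drift01 i); case/andP: (alive_prob01 i) => *; nra.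
Qed.

Lemma Eprefix_lifetime_wald :
  Eprefix n lifetime = Eprefix n drift_sum + 2 * Eprefix n fails.
Proof.
rewrite -EprefixZ -[RHS]add0r -(Eprefix_noise n) -!EprefixD.
by apply: eq_Eprefix => s _; rewrite lifetime_split walk_split addrA.
Qed.

Lemma Eprefix_fails_bounds :
  x%:R * (1 - alive_prob n) <= Eprefix n fails <= x%:R.
Proof.
apply/andP; split.
  rewrite /alive_prob -[X in X - _](Eprefix_cst n 1) -EprefixB -EprefixZ.
  by apply: ler_Eprefix p01 _ => s _; case/andP: (fails_bounds s).
rewrite -[X in _ <= X](Eprefix_cst n).
by apply: ler_Eprefix p01 _ => s _; case/andP: (fails_bounds s).
Qed.

Lemma Eprefix_walk_sqr_le y : 0 < y -> Eprefix n (fun s => walk s ^+ 2) <=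
  (1 + y^-1) * (2 * x%:R + Delta) + (1 + y) * Delta ^+ 2.
Proof.
move=> y0; have [_ noise_le] := andP Eprefix_noise_sqr_bounds.
have [_ Edrift_le] := andP Eprefix_drift_sum_bounds.
have [_ Efails_le] := andP Eprefix_fails_bounds.
apply: le_trans (ler_Eprefix (g := fun s =>
  (1 + y^-1) * noise s ^+ 2 + (1 + y) * drift_sum s ^+ 2) p01 _) _.
  by move=> s _; rewrite walk_split sqrD_le.
rewrite EprefixD !EprefixZ; apply: lerD; apply: ler_wpM2l.
- by rewrite addr_ge0 ?ler01 ?invr_ge0 ?ltW.
- by apply: le_trans noise_le _; rewrite Eprefix_lifetime_wald; lra.
- by rewrite addr_ge0 ?ler01 ?ltW.
- exact: Eprefix_drift_sum_sqr_le.
Qed.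

Lemma Eprefix_walk_sqr_ge y : 1 <= y ->
  (1 - y^-1) * (2 * x%:R * (1 - alive_prob n) - Delta) - y * Delta ^+ 2
  <= Eprefix n (fun s => walk s ^+ 2).
Proof.
move=> y1; have y0 : 0 < y by lra.
have [noise_ge _] := andP Eprefix_noise_sqr_bounds.
have [Edrift_ge _] := andP Eprefix_drift_sum_bounds.
have [Efails_ge _] := andP Eprefix_fails_bounds.
apply: le_trans (ler_Eprefix (f := fun s =>
  (1 - y^-1) * noise s ^+ 2 - y * drift_sum s ^+ 2) p01 _); last first.
  by move=> s _; rewrite walk_split sqrD_ge.
rewrite EprefixB !EprefixZ; apply: lerB; apply: ler_wpM2l.
- by rewrite subr_ge0 invf_le1.
- by apply: le_trans noise_ge; rewrite Eprefix_lifetime_wald; lra.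
- exact: ltW.
- exact: Eprefix_drift_sum_sqr_le.
Qed.

Lemma Eprefix_trunc_sqdev_le :
  Eprefix n (trunc_sqdev n) <= Eprefix n (fun s => walk s ^+ 2) + n.+1%:R ^+ 2 * alive_prob n.
Proof.
rewrite -EprefixZ -EprefixD; apply: ler_Eprefix p01 _ => s _.
rewrite /trunc_sqdev /alive; case: leqP => h /=; first by rewrite mulr0 addr0.
have : ((n.+1 - 2 * x) ^ 2)%N%:R <= n.+1%:R ^+ 2 :> R.
  by rewrite -natrX ler_nat leq_exp2r ?leq_subr.
by have := sqr_ge0 (walk s); rewrite mulr1; lra.
Qed.

Lemma Eprefix_trunc_sqdev_ge :
  Eprefix n (fun s => walk s ^+ 2) - n%:R ^+ 2 * alive_prob n <= Eprefix n (trunc_sqdev n).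
Proof.
rewrite -EprefixZ -EprefixB; apply: ler_Eprefix p01 _ => s hs.
rewrite /trunc_sqdev /alive; case: leqP => h /=; first by rewrite mulr0 subr0.
have : walk s ^+ 2 <= n%:R ^+ 2.
  by rewrite -real_normK ?num_real // lerXn2r ?nnegrE ?ler0n // -hs norm_walk.
by have := ler0n R ((n.+1 - 2 * x) ^ 2); rewrite mulr1; lra.
Qed.

Lemma sqrS_alive_prob_le : (0 < n)%N ->
  n.+1%:R ^+ 2 * alive_prob n <= 2 ^+ x * expR (Delta / 4) * 1536 / n%:R.
Proof.
move=> n0.
have decay : alive_prob n <= 2 ^+ x * expR (Delta / 4) / expR (n%:R / 4).
  apply: le_trans (alive_prob_le_prod n) _; rewrite -mulrA ler_wpM2l ?exprn_ge0 ?ler0n //.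
  apply: le_trans (prod_le_expR n) _; rewrite -expRB -mulrBl ler_expR.
  by rewrite ler_wpM2r ?invr_ge0 ?ler0n // lerD2r.
rewrite mulrC; apply: le_trans (ler_wpM2r (exprn_ge0 _ (ler0n _ _)) decay) _.
have -> : 2 ^+ x * expR (Delta / 4) / expR (n%:R / 4) * n.+1%:R ^+ 2 =
    2 ^+ x * expR (Delta / 4) * (n.+1%:R ^+ 2 / expR (n%:R / 4)) by ring.
rewrite -[X in _ <= X]mulrA; apply: ler_wpM2l; last exact: sqrS_div_expR_le.
by rewrite mulr_ge0 ?expR_ge0 ?exprn_ge0 ?ler0n.
Qed.

Lemma Eprefix_trunc_sqdev_upper y : 0 < y -> (0 < n)%N ->
  Eprefix n (trunc_sqdev n) <= (1 + y^-1) * (2 * x%:R + Delta) + (1 + y) * Delta ^+ 2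
                                + 2 ^+ x * expR (Delta / 4) * 1536 / n%:R.
Proof.
move=> y0 n0; apply: le_trans Eprefix_trunc_sqdev_le _.
exact: lerD (Eprefix_walk_sqr_le y0) (sqrS_alive_prob_le n0).
Qed.

Lemma Eprefix_trunc_sqdev_lower y : 1 <= y -> (0 < n)%N ->
  (1 - y^-1) * (2 * x%:R - Delta) - y * Delta ^+ 2
    - (2 * x%:R + 1) * (2 ^+ x * expR (Delta / 4) * 1536 / n%:R)
  <= Eprefix n (trunc_sqdev n).
Proof.
move=> y1 n0; apply: le_trans Eprefix_trunc_sqdev_ge.
apply: le_trans (lerB (Eprefix_walk_sqr_ge y1) (lexx _)).
set K := _ / n%:R in n0 *; set P := alive_prob n.
have [P0 _] := andP (alive_prob01 n).
have Q_le : n.+1%:R ^+ 2 * P <= K := sqrS_alive_prob_le n0.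
have P_le : P <= K.
  by apply: le_trans Q_le; rewrite ler_peMl // -natrX ler1n expn_gt0.
have nP_le : n%:R ^+ 2 * P <= K.
  by apply: le_trans Q_le; rewrite ler_wpM2r // -!natrX ler_nat leq_exp2r.
have xP_le : (1 - y^-1) * (2 * x%:R * P) <= 2 * x%:R * K.
  apply: le_trans (ler_piMl _ _) _; first by rewrite !mulr_ge0 ?ler0n.
    by rewrite lerBlDr lerDl invr_ge0 (le_trans ler01 y1).
  by rewrite ler_wpM2l ?mulr_ge0 ?ler0n.
lra.
Qed.

End Moments.
End StoppedWalk.
End CookieWalk.

(** * Cylinder events *)

Section CylinderIntegral.
Context (d : measure_display) (T : measurableType d) (R : realType).
Variables (P : probability T R) (p : nat -> R) (B : nat -> T -> bool).
Hypothesis cookieB : cookie_process P p B.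

Definition outcomes (n : nat) (w : T) : seq bool := mkseq (B^~ w) n.

Definition cylinder (s : seq bool) : set T :=
  \bigcap_(i in [set` iota 0 (size s)]) [set w | B i w = nth true s i].

Lemma B_false_setC i : [set w | B i w = false] = ~` [set w | B i w].
Proof. by apply/seteqP; split => w /=; case: (B i w). Qed.

Lemma measurable_B_eq i b : measurable [set w | B i w = b].
Proof.
case: cookieB => mB _; case: b; first exact: mB.
by rewrite B_false_setC; apply: measurableC.
Qed.

Lemma prob_B_eq i b : P [set w | B i w = b] = (trial_prob p i b)%:E.
Proof.
case: cookieB => mB [PB _]; case: b; first exact: PB.
by rewrite B_false_setC probability_setC // PB.
Qed.

Lemma measurable_cylinder s : measurable (cylinder s).
Proof.
apply: fin_bigcap_measurable; first exact: finite_seq.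
by move=> i _; apply: measurable_B_eq.
Qed.

Lemma prob_cylinder s : P (cylinder s) = (seq_prob p s)%:E.
Proof.
case: cookieB => _ [_ indepB]; rewrite /cylinder indepB ?iota_uniq //.
under eq_bigr do rewrite prob_B_eq.
rewrite prodEFin /seq_prob -(big_mkord xpredT (fun i => trial_prob p i (nth true s i))).
by rewrite /index_iota subn0.
Qed.

Lemma cylinderP s w : cylinder s w <-> outcomes (size s) w = s.
Proof.
split=> [Aw|<- i /=]; last by rewrite mem_iota size_mkseq add0n => lti; rewrite nth_mkseq.
apply: (@eq_from_nth _ true); first by rewrite size_mkseq.
by move=> i; rewrite size_mkseq => lti; rewrite nth_mkseq //; apply: Aw; rewrite /= mem_iota.
Qed.

Lemma sum_indic_cylinder n (f : seq bool -> R) w :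
  \sum_(s <- bool_seqs n) f s * \1_(cylinder s) w = f (outcomes n w).
Proof.
have mem_n : outcomes n w \in bool_seqs n by rewrite mem_bool_seqs size_mkseq.
rewrite (bigD1_seq _ mem_n (uniq_bool_seqs n)) /= big_seq_cond big1 ?addr0.
  by rewrite indicE mem_set ?mulr1 //; apply/cylinderP; rewrite size_mkseq.
move=> s /andP[]; rewrite mem_bool_seqs => /eqP sn ne_s.
rewrite indicE memNset ?mulr0 // => /cylinderP; rewrite sn => out_s.
by rewrite out_s eqxx in ne_s.
Qed.

Lemma outcomes_fun_sum n (f : seq bool -> R) :
  (fun w => (f (outcomes n w))%:E) =
  (fun w => \sum_(s <- bool_seqs n) ((f s)%:E * (\1_(cylinder s) w)%:E))%E.
Proof.
apply/funext => w; rewrite -sum_indic_cylinder -sumEFin.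
by apply: eq_bigr => s _; rewrite EFinM.
Qed.

Lemma measurable_indic_cylinder s :
  measurable_fun [set: T] (fun w => (\1_(cylinder s) w : R)%:E).
Proof. by apply/measurable_EFinP; exact: measurable_indic (measurable_cylinder s). Qed.

Lemma measurable_fun_outcomes n (f : seq bool -> R) :
  measurable_fun [set: T] (fun w => ((f (outcomes n w))%:E : \bar R)).
Proof.
rewrite outcomes_fun_sum; apply: emeasurable_sum => s.
exact: measurable_funeM (measurable_indic_cylinder s).
Qed.

Lemma integral_outcomes n (f : seq bool -> R) : (forall s, 0 <= f s) ->
  (\int[P]_w (f (outcomes n w))%:E = (Eprefix p n f)%:E)%E.
Proof.
move=> f0; have indic0 s w : (0 <= ((\1_(cylinder s) w)%:E : \bar R))%E.
  by rewrite lee_fin indicE ler0n.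
rewrite outcomes_fun_sum ge0_integral_sum //; last first.
- by move=> s w _; rewrite mule_ge0 ?lee_fin.
- by move=> s; apply: measurable_funeM (measurable_indic_cylinder s).
rewrite Eprefix_sum -sumEFin; apply: eq_bigr => s _.
rewrite ge0_integralZl ?lee_fin //; last exact: measurable_indic_cylinder.
rewrite integral_indic //; last exact: measurable_cylinder.
rewrite [RHS]EFinM muleC; congr (_ * _)%E.
apply: eq_trans (prob_cylinder s); congr (P _).
by apply/seteqP; split => w // [].
Qed.

End CylinderIntegral.

Section HittingTime.
Variables (R : realType) (x : nat) (b : nat -> bool).

Lemma nfailS k : nfail b k.+1 = (nfail b k + ~~ b k)%N.
Proof. by rewrite /nfail big_ord_recr. Qed.

Lemma nfail_le k : (nfail b k <= k)%N.
Proof.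
elim: k => [|k IH]; first by rewrite /nfail big_ord0.
by rewrite nfailS; case: (b k) => /=; lia.
Qed.

Lemma nfail_homo : {homo nfail b : k m / (k <= m)%N}.
Proof. by apply: (homo_leq leqnn leq_trans) => k; rewrite nfailS leq_addr. Qed.

Lemma nfail_mkseq n i : (i <= n)%N -> nfail (nth true (mkseq b n)) i = nfail b i.
Proof. by move=> le_in; apply: eq_bigr => j _; rewrite nth_mkseq // (leq_trans (ltn_ord j)). Qed.

(* [nfail b] starts at 0 and grows by at most 1 per trial, so it stays below
   [x] until it first equals [x]. *)
Lemma nfail_lt_before_hit t :
  (forall k, (k < t)%N -> nfail b k != x) -> forall k, (k < t)%N -> (nfail b k < x)%N.
Proof.
move=> ne; elim=> [|k IH] lt_kt; have := ne _ lt_kt.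
  by rewrite /nfail big_ord0 eq_sym lt0n.
by have := IH (ltnW lt_kt); rewrite nfailS; case: (b k) => /=; lia.
Qed.

Lemma count_alive_after_hit t n : nfail b t = x ->
  (forall k, (k < t)%N -> nfail b k != x) -> (t <= n)%N ->
  (\sum_(i < n) (nfail b i < x))%N = t.
Proof.
move=> hit ne le_tn; rewrite -[RHS]card_ord -sum1_card (big_ord_widen n (fun=> 1%N) le_tn).
rewrite [RHS]big_mkcond; apply: eq_bigr => i _; case: (ltnP i t) => [lt_it|le_ti].
  by rewrite (nfail_lt_before_hit ne).
by rewrite ltnNge -hit nfail_homo.
Qed.

Lemma trunc_sqdev_mkseq n : trunc_sqdev R x n (mkseq b n) =
  if (x <= nfail b n)%N then ((\sum_(i < n) (nfail b i < x))%N%:R - 2 * x%:R) ^+ 2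
  else ((n.+1 - 2 * x) ^ 2)%N%:R.
Proof.
rewrite /trunc_sqdev /nfails size_mkseq nfail_mkseq //; case: leqP => // le_xn.
have -> : walk R x (mkseq b n) = lifetime R x (mkseq b n) - 2 * fails R x (mkseq b n).
  by rewrite lifetime_split addrK.
rewrite fails_min /nfails size_mkseq nfail_mkseq // (minn_idPr le_xn) natr_sum.
congr ((_ - _) ^+ 2); rewrite /lifetime /stopped_sum size_mkseq; apply: eq_bigr => i _.
by rewrite /alive_at nfail_mkseq ?mulr1 // ltnW.
Qed.

Lemma trunc_sqdev_mkseqS n :
  trunc_sqdev R x n (mkseq b n) <= trunc_sqdev R x n.+1 (mkseq b n.+1).
Proof.
rewrite !trunc_sqdev_mkseq big_ord_recr /= nfailS.
case: (leqP x (nfail b n)) => [le_xn|lt_nx].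
  by rewrite (leq_trans le_xn (leq_addr _ _)) addn0.
case: leqP => [_|_]; last by rewrite ler_nat leq_exp2r // leq_sub2r.
have -> : (\sum_(i < n) (nfail b i < x))%N = n.
  rewrite -[RHS]card_ord -sum1_card; apply: eq_bigr => i _.
  by rewrite (leq_ltn_trans (nfail_homo (ltnW (ltn_ord i))) lt_nx).
rewrite addn1; case: (leqP (2 * x) n.+1) => [le_2x|lt_n2x].
  by rewrite natrX natrB // natrM.
have -> : ((n.+1 - 2 * x) ^ 2)%N = 0%N by apply/eqP; rewrite expn_eq0 subn_eq0 ltnW.
exact: sqr_ge0.
Qed.

Lemma trunc_sqdev_cvg :
  (fun n => (trunc_sqdev R x n (mkseq b n))%:E) @ \oo --> sqdev b x.
Proof.
rewrite /sqdev /Uval; case: pselect => [hit|nohit].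
  case: ex_minnP => t /eqP hit_t min_t.
  have ne k : (k < t)%N -> nfail b k != x.
    by move=> lt_kt; apply/negP => /min_t; rewrite leqNgt lt_kt.
  have le_xt : (x <= t)%N by rewrite -[X in (X <= _)%N]hit_t nfail_le.
  apply: cvg_near_cst; exists t => // n /= le_tn.
  rewrite trunc_sqdev_mkseq -[X in (X <= _)%N]hit_t nfail_homo //.
  by rewrite (count_alive_after_hit hit_t ne le_tn) natrB //; congr (_%:E); ring.
have below n : (nfail b n < x)%N.
  apply: (@nfail_lt_before_hit n.+1) => // k _; apply/negP => /eqP hk.
  by apply: nohit; exists k; apply/eqP.
under eq_fun do rewrite trunc_sqdev_mkseq leqNgt below /=.
apply/cvgeryP/cvgryPge => A; exists (Num.bound `|A| + 2 * x)%N => // n /= le_n.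
have {}le_n : (Num.bound `|A| + 2 * x <= n)%N := le_n.
apply: le_trans (ler_norm A) (ltW (lt_le_trans (archi_boundP (normr_ge0 A)) _)).
have : (Num.bound `|A| < n.+1 - 2 * x)%N by lia.
rewrite ler_nat => /ltnW /leq_trans; apply.
by rewrite leq_pmulr // subn_gt0; lia.
Qed.

End HittingTime.

(** * Letting the observation time go to infinity *)

Section NuEstimate.
Context (d : measure_display) (T : measurableType d) (R : realType).
Variables (P : probability T R) (p : nat -> R) (B : nat -> T -> bool).
Hypothesis cookieB : cookie_process P p B.
Hypothesis p_range : forall i, 1 / 2 <= p i <= 1.
Variable Delta : R.
Hypothesis drift_le : forall n, \sum_(k < n) drift p k <= Delta.

Let Delta_ge0 : 0 <= Delta.
Proof. by have := drift_le 0; rewrite big_ord0. Qed.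

Section FixedFailures.
Variable x : nat.

Let g n w : \bar R := (trunc_sqdev R x n (outcomes B n w))%:E.

Let measurable_g n : measurable_fun [set: T] (g n).
Proof. exact: measurable_fun_outcomes cookieB n (trunc_sqdev R x n). Qed.

Let g_homo w : {homo g^~ w : n m / (n <= m)%N >-> (n <= m)%E}.
Proof. by apply/nondecreasing_seqP => n; rewrite lee_fin trunc_sqdev_mkseqS. Qed.

Let integral_g n : (\int[P]_w g n w = (Eprefix p n (trunc_sqdev R x n))%:E)%E.
Proof. exact/integral_outcomes/trunc_sqdev_ge0. Qed.

Lemma Eprefix_trunc_sqdev_cvg : (fun n => (Eprefix p n (trunc_sqdev R x n))%:E)
  @ \oo --> (\int[P]_w sqdev (B^~ w) x)%E.
Proof.
have g0 n w : [set: T] w -> (0 <= g n w)%E by move=> _; rewrite lee_fin trunc_sqdev_ge0.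
have := cvg_monotone_convergence (mu := P) measurableT measurable_g g0 (fun w _ => g_homo w).
rewrite (eq_integral (fun w => sqdev (B^~ w) x)) => [|w _]; last first.
  by apply: cvg_lim => //; exact: trunc_sqdev_cvg.
by under eq_fun do rewrite integral_g.
Qed.

Lemma Eprefix_trunc_sqdev_homo :
  {homo (fun n => Eprefix p n (trunc_sqdev R x n)) : n m / (n <= m)%N >-> n <= m}.
Proof.
move=> n m le_nm; rewrite -lee_fin -!integral_g; apply: ge0_le_integral => //.
- by move=> w _; rewrite lee_fin trunc_sqdev_ge0.
- by move=> w _; apply: g_homo.
Qed.

Hypothesis x_gt0 : (0 < x)%N.
Let y : R := Num.sqrt x%:R.

Let y_ge1 : 1 <= y.
Proof. by rewrite /y -[X in X <= _]sqrtr1 ler_sqrt ?ler0n // ler1n. Qed.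

Let K : R := 2 ^+ x * expR (Delta / 4) * 1536.

Lemma integral_sqdev_bounds : exists r : R,
  (\int[P]_w sqdev (B^~ w) x = r%:E)%E /\
  (1 - y^-1) * (2 * x%:R - Delta) - y * Delta ^+ 2 <= r <=
  (1 + y^-1) * (2 * x%:R + Delta) + (1 + y) * Delta ^+ 2.
Proof.
have y0 : 0 < y := lt_le_trans ltr01 y_ge1.
pose u n := Eprefix p n (trunc_sqdev R x n).
have u_cvg : (fun n => (u n)%:E) @ \oo --> (\int[P]_w sqdev (B^~ w) x)%E.
  exact: Eprefix_trunc_sqdev_cvg.
set I := (\int[P]_w _)%E in u_cvg *.
have I_lim : I = lim ((fun n => (u n)%:E) @ \oo) by rewrite (cvg_lim _ u_cvg).
have u_le_I n : ((u n)%:E <= I)%E.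
  rewrite I_lim; apply: lime_ge; first exact: cvgP u_cvg.
  by exists n => // m /= le_nm; rewrite lee_fin; exact: Eprefix_trunc_sqdev_homo.
have u_le n : u n <= (1 + y^-1) * (2 * x%:R + Delta) + (1 + y) * Delta ^+ 2.
  apply: (@ler_of_ler_add_div_nat _ _ _ K n) => m le_nm m0.
  apply: le_trans (Eprefix_trunc_sqdev_homo le_nm) _.
  exact (Eprefix_trunc_sqdev_upper x p_range (drift_le m) y0 m0).
have I_le : (I <= ((1 + y^-1) * (2 * x%:R + Delta) + (1 + y) * Delta ^+ 2)%:E)%E.
  rewrite I_lim; apply: lime_le; first exact: cvgP u_cvg.
  by apply: nearW => n; rewrite lee_fin u_le.
have I_fin : I \is a fin_num.
  rewrite ge0_fin_numE ?(le_lt_trans I_le) ?ltry //.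
  by apply: le_trans (u_le_I 0); rewrite lee_fin trunc_sqdev_ge0.
exists (fine I); rewrite fineK //; split => //; apply/andP; split; last by rewrite -lee_fin fineK.
apply: (@ler_of_ler_add_div_nat _ _ _ ((2 * x%:R + 1) * K) 1) => m _ m0.
have := Eprefix_trunc_sqdev_lower x p_range (drift_le m) y_ge1 m0.
have := u_le_I m; rewrite -(fineK I_fin) lee_fin -/(u m) !mulrA; lra.
Qed.

Lemma nu_estimate : exists v : R,
  nu P B x = v%:E /\ `|v - 2| <= (2 + 2 * Delta + 2 * Delta ^+ 2) / y.
Proof.
have [r [int_r /andP[r_ge r_le]]] := integral_sqdev_bounds.
exists (x%:R^-1 * r); split; first by rewrite /nu int_r.
have y2 : y ^+ 2 = x%:R by rewrite sqr_sqrtr ?ler0n.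
by rewrite mulrC -y2; apply: norm_ratio_sub2_le Delta_ge0 y_ge1 _ _; rewrite y2.
Qed.

End FixedFailures.

Lemma nu_cvg : nu P B @ \oo --> 2%:E.
Proof.
set c := 2 + 2 * Delta + 2 * Delta ^+ 2.
apply/fine_cvgP; split.
  by exists 1%N => // n /= n_gt0; have [v [-> _]] := nu_estimate n_gt0.
apply/cvgrPdist_le => e e0; exists (Num.bound ((c / e) ^+ 2)).+1 => // n /= le_n.
have n_gt0 : (0 < n)%N by apply: leq_trans le_n.
have [v [-> v_near]] := nu_estimate n_gt0.
rewrite /= distrC; apply: le_trans v_near _.
have sqrt_n_gt0 : 0 < Num.sqrt (n%:R : R) by rewrite sqrtr_gt0 ltr0n.
rewrite ler_pdivrMr // -ler_pdivrMl //; apply: le_trans (ler_norm _) _.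
rewrite -sqrtr_sqr ler_sqrt ?ler0n // mulrC.
by apply/ltW/(lt_le_trans (archi_boundP (sqr_ge0 _))); rewrite ler_nat ltnW.
Qed.

Lemma nu_rate x : expR 1 < x%:R :> R -> (`| nu P B x - 2%:E | <=
  ((2 + 2 * Delta + 2 * Delta ^+ 2) * ln x%:R ^+ 4 / Num.sqrt x%:R)%:E)%E.
Proof.
move=> x_gt_e; have x_gt0 : (0 < x)%N by rewrite -(ltr0n R) (lt_trans (expR_gt0 1)).
have [v [-> v_near]] := nu_estimate x_gt0.
rewrite -EFinB abse_EFin lee_fin; apply: le_trans v_near _.
have ln_ge1 : 1 <= ln (x%:R : R).
  by rewrite -[X in X <= _](expRK 1) ler_ln ?posrE ?expR_gt0 ?ltr0n // ltW.
rewrite ler_wpM2r ?invr_ge0 ?sqrtr_ge0 // ler_peMr ?exprn_ege1 //.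
by rewrite addr_ge0 ?mulr_ge0 ?sqr_ge0 // addr_ge0 ?mulr_ge0 ?ler0n.
Qed.

End NuEstimate.

Unset Implicit Arguments.

Theorem lemma4p2 (R : realType) (p : nat -> R)
  (hp : forall i, 1 / 2 <= p i < 1)
  (hdelta : (\sum_(0 <= i <oo) ((2 * p i - 1)%:E) < +oo)%E) :
  (forall (d : measure_display) (T : measurableType d)
     (P : probability T R) (B : nat -> T -> bool),
     cookie_process P p B -> nu P B @ \oo --> 2%:E) /\
  exists (C : R) (N : nat),
    forall (d : measure_display) (T : measurableType d)
      (P : probability T R) (B : nat -> T -> bool),
      cookie_process P p B ->
      forall x : nat, (N <= x)%N ->
        (`| nu P B x - 2%:E | <= (C * ln (x%:R) ^+ 4 / Num.sqrt (x%:R))%:E)%E.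
Proof.
have p_range i : 1 / 2 <= p i <= 1 by case/andP: (hp i) => -> /ltW.
set S := (\sum_(0 <= i <oo) _)%E in hdelta.
have drift_le_S n : ((\sum_(k < n) drift p k)%:E <= S)%E.
  rewrite -sumEFin -(big_mkord xpredT (fun k => (drift p k)%:E)).
  apply: nneseries_lim_ge => k _ _; rewrite lee_fin /drift subr_ge0.
  by case/andP: (hp k) => *; lra.
have S_fin : S \is a fin_num.
  by rewrite ge0_fin_numE // (le_trans _ (drift_le_S 0)) // big_ord0.
have drift_le n : \sum_(k < n) drift p k <= fine S by rewrite -lee_fin fineK.
split=> [d T P B cookieB|]; first exact (nu_cvg cookieB p_range drift_le).
exists (2 + 2 * fine S + 2 * fine S ^+ 2), (Num.bound (expR 1 : R)) => d T P B cookieB x le_x.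
apply: (nu_rate cookieB p_range drift_le).
by apply: lt_le_trans (archi_boundP (ltW (expR_gt0 1))) _; rewrite ler_nat.
Qed.
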